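(* Let $\mathcal D$ be a fixed strict fundamental domain for the action of $R_\omega$ by translations on $K_\omega$. There exists a bijection from $R^{2,\sharp}_{\omega,\rm prim}$ to $\Gamma^\sharp\cap(P^-U^+_{\mathcal D})$ of the form $v\mapsto\gamma_v=\begin{pmatrix}v&w_v\end{pmatrix}$ (the matrix with first column $v$ and second column some $w_v\in R_\omega^2$) such that for every $n\in\mathbb Z$, for all measurable subsets $\Theta$ of $\mathbb S^1_\omega$ and $\mathcal D'$ of $\mathcal D$, and for every nonzero ideal $I$ of $R_\omega$, the following are equivalent: (1) $\|v\|_\omega=q_\omega^n$, $y_v\in I$, $\overline v\in\Theta$ and $x_{w_v}/x_v\in\mathcal D'$; (2) $\gamma_v\in\Gamma_0[I]$ and $\gamma_v\in P^-_\Theta A_nU^+_{\mathcal D'}$.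
   Context: $K$ is a global function field over a finite field $\mathbb{F}_q$ (function field of a geometrically connected smooth projective curve $\mathbf C$ over $\mathbb F_q$), $\omega$ a normalized discrete valuation of $K$, $K_\omega$ the completion, $\mathcal O_\omega$ its valuation ring, $\pi_\omega$ a fixed uniformizer, $q_\omega$ the order of the residue field, $|x|_\omega=q_\omega^{-\omega(x)}$, and $R_\omega$ the ring of elements of $K$ whose only poles are at $\omega$. Elements of $K_\omega^2$ are written $v=(x_v,y_v)$ and identified with column vectors; $\|v\|_\omega=\max\{|x_v|_\omega,|y_v|_\omega\}$, $\overline v=\pi_\omega^{\log_{q_\omega}\|v\|_\omega}v$, $\mathbb S^1_\omega=\{v:\|v\|_\omega=1\}$. $R^2_{\omega,\rm prim}=\{(a,b)\in R_\omega^2:aR_\omega+bR_\omega=R_\omega\}$ and $R^{2,\sharp}_{\omega,\rm prim}=\{(a,b)\in R^2_{\omega,\rm prim}:|a|_\omega\ge|b|_\omega\}$. $G=\mathrm{SL}_2(K_\omega)$, $\Gamma=\mathrm{SL}_2(R_\omega)$, $\Gamma^\sharp=\{\begin{pmatrix}\alpha&\gamma\\ \beta&\delta\end{pmatrix}\in\Gamma:|\alpha|_\omega\ge|\beta|_\omega\}$, $\Gamma_0[I]=\{\begin{pmatrix}a&c\\ b&d\end{pmatrix}\in\Gamma:b\in I\}$. $P^-$ is the lower triangular subgroup of $G$, $P^-(\mathcal O_\omega)=P^-\cap\mathcal M_2(\mathcal O_\omega)$, $U^+$ the upper unipotent subgroup. For $\Theta\subset\mathbb S^1_\omega$, $P^-_\Theta$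 is the set of elements of $P^-(\mathcal O_\omega)$ whose first column lies in $\Theta$; $A_n=\{\mathrm{diag}(\pi_\omega^{-n},\pi_\omega^n)\}$; for $\mathcal D'\subset K_\omega$, $U^+_{\mathcal D'}=\{\begin{pmatrix}1&\gamma\\0&1\end{pmatrix}:\gamma\in\mathcal D'\}$. *)

From mathcomp Require Import all_boot all_order all_algebra.
Set Implicit Arguments. Unset Strict Implicit. Unset Printing Implicit Defensive.
Import Order.TTheory GRing.Theory Num.Theory.
Local Open Scope ring_scope.

(* A normalized discrete valuation u : T -> int, with the convention u 0 = 0
   (the value at 0 is irrelevant, u(0) "= +oo" is handled separately). *)
Definition is_ndval (T : fieldType) (u : T -> int) : Prop :=
  [/\ u 0 = 0,
      forall x y, x != 0 -> y != 0 -> u (x * y) = u x + u y,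
      forall x y, x != 0 -> y != 0 -> x + y != 0 ->
        Order.min (u x) (u y) <= u (x + y)
    & exists x, x != 0 /\ u x = 1].

Definition algebraic_over (F K : fieldType) (iota : {rmorphism F -> K}) (x : K) :=
  exists p : {poly F}, p != 0 /\ (map_poly iota p).[x] = 0.

(* K is a finite extension of a rational function field F(t), and F is
   algebraically closed in K (full constant field): K is the function field of
   a geometrically connected smooth projective curve over F = F_q. *)
Definition is_global_function_field (F : finFieldType) (K : fieldType)
  (iota : {rmorphism F -> K}) : Prop :=
  (exists t : K, ~ algebraic_over iota t /\
     exists (n : nat) (b : 'I_n -> K), forall x : K,
       exists p q : 'I_n -> {poly F}, (forall i, q i != 0) /\
         x = \sum_(i < n) ((map_poly iota (p i)).[t] / (map_poly iota (q i)).[t]) * b i)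
  /\ (forall x : K, algebraic_over iota x -> exists a : F, x = iota a).

(* R_omega: elements of K whose only poles are at omega *)
Definition Romega (K : fieldType) (om : K -> int) (x : K) : Prop :=
  forall u : K -> int, is_ndval u -> (exists z, z != 0 /\ u z != om z) ->
    x != 0 -> 0 <= u x.

Definition close (Kw : fieldType) (wv : Kw -> int) (k : int) (a b : Kw) : Prop :=
  a = b \/ k <= wv (a - b).

Definition is_completion (K Kw : fieldType) (j : {rmorphism K -> Kw})
  (om : K -> int) (wv : Kw -> int) : Prop :=
  [/\ forall x, x != 0 -> wv (j x) = om x,
      forall a : nat -> Kw,
        (forall k, exists N, forall m n, (N <= m)%N -> (N <= n)%N -> close wv k (a m) (a n)) ->
        exists l, forall k, exists N, forall n, (N <= n)%N -> close wv k (a n) l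
    &
      forall (x : Kw) (k : int), exists y : K, close wv k x (j y)].

Definition Rw (K Kw : fieldType) (j : {rmorphism K -> Kw}) (om : K -> int) (z : Kw) : Prop :=
  exists x, Romega om x /\ z = j x.

Section Norms.
Variables (Kw : fieldType) (wv : Kw -> int).

(* |a|_omega >= |b|_omega *)
Definition absge (a b : Kw) : Prop := b = 0 \/ (a != 0 /\ wv a <= wv b).

(* log_{q_omega} ||v||_omega for v <> 0 *)
Definition lnorm (v : Kw * Kw) : int :=
  if v.1 == 0 then - wv v.2 else if v.2 == 0 then - wv v.1
  else - Order.min (wv v.1) (wv v.2).

Definition norm_is_pow (v : Kw * Kw) (n : int) : Prop := v <> (0, 0) /\ lnorm v = n.

Definition sphere1 (v : Kw * Kw) : Prop := norm_is_pow v 0.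

Definition vbar (pi : Kw) (v : Kw * Kw) : Kw * Kw :=
  (pi ^ (lnorm v) * v.1, pi ^ (lnorm v) * v.2).

Definition inO (x : Kw) : Prop := x = 0 \/ 0 <= wv x.

Definition open1 (U : Kw -> Prop) : Prop :=
  forall x, U x -> exists k, forall y, close wv k x y -> U y.
Definition open2 (U : Kw * Kw -> Prop) : Prop :=
  forall x, U x -> exists k, forall y, close wv k x.1 y.1 -> close wv k x.2 y.2 -> U y.
End Norms.

Definition is_sigma_algebra (T : Type) (S : (T -> Prop) -> Prop) : Prop :=
  [/\ S (fun _ => True),
      forall A, S A -> S (fun x => ~ A x)
    & forall A : nat -> T -> Prop, (forall n, S (A n)) -> S (fun x => exists n, A n x)].

Definition borel (T : Type) (op : (T -> Prop) -> Prop) (A : T -> Prop) : Prop :=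
  forall S, is_sigma_algebra S -> (forall U, op U -> S U) -> S A.

Definition prim2sharp (Kw : fieldType) (R : Kw -> Prop) (wv : Kw -> int) (v : Kw * Kw) : Prop :=
  [/\ R v.1, R v.2, (exists a b, R a /\ R b /\ a * v.1 + b * v.2 = 1) & absge wv v.1 v.2].

Definition is_nonzero_ideal (Kw : fieldType) (R : Kw -> Prop) (I : Kw -> Prop) : Prop :=
  [/\ forall x, I x -> R x, I 0,
      forall x y, I x -> I y -> I (x + y),
      forall r x, R r -> I x -> I (r * x)
    & exists x, I x /\ x != 0].

Definition strict_fund_dom (Kw : fieldType) (R : Kw -> Prop) (D : Kw -> Prop) : Prop :=
  forall x : Kw, exists! r, R r /\ D (x + r).

Definition i0 : 'I_2 := ord0.
Definition i1 : 'I_2 := ord_max.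

(* the matrix ((a, c), (b, d)) *)
Definition mx2 (T : Type) (a c b d : T) : 'M[T]_2 :=
  \matrix_(i < 2, j < 2)
    if val i == 0%N then (if val j == 0%N then a else c)
    else (if val j == 0%N then b else d).

Definition mcol1 (T : Type) (M : 'M[T]_2) : T * T := (M i0 i0, M i1 i0).
Definition mcol2 (T : Type) (M : 'M[T]_2) : T * T := (M i0 i1, M i1 i1).

Section Groups.
Variables (Kw : fieldType) (wv : Kw -> int) (R : Kw -> Prop).

Definition SL2 (M : 'M[Kw]_2) : Prop := \det M = 1.
Definition GammaR (M : 'M[Kw]_2) : Prop := SL2 M /\ forall i j, R (M i j).
Definition Gamma_sharp (M : 'M[Kw]_2) : Prop := GammaR M /\ absge wv (M i0 i0) (M i1 i0).
Definition Gamma0 (I : Kw -> Prop) (M : 'M[Kw]_2) : Prop := GammaR M /\ I (M i1 i0).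
Definition Pminus (M : 'M[Kw]_2) : Prop := SL2 M /\ M i0 i1 = 0.
Definition PminusO (M : 'M[Kw]_2) : Prop := Pminus M /\ forall i j, inO wv (M i j).
Definition PminusTheta (Th : Kw * Kw -> Prop) (M : 'M[Kw]_2) : Prop :=
  PminusO M /\ Th (mcol1 M).
Definition An (pi : Kw) (n : int) : 'M[Kw]_2 := mx2 (pi ^ (- n)) 0 0 (pi ^ n).
Definition Uplus (g : Kw) : 'M[Kw]_2 := mx2 1 g 0 1.
Definition PU (D : Kw -> Prop) (M : 'M[Kw]_2) : Prop :=
  exists p g, Pminus p /\ D g /\ M = p *m Uplus g.
Definition PThetaAU (pi : Kw) (Th : Kw * Kw -> Prop) (n : int) (D' : Kw -> Prop)
  (M : 'M[Kw]_2) : Prop :=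
  exists p g, PminusTheta Th p /\ D' g /\ M = p *m An pi n *m Uplus g.
End Groups.

From mathcomp Require Import all_boot all_order all_algebra.
From mathcomp Require Import ring zify.
From Stdlib Require Import ClassicalEpsilon.
Set Implicit Arguments. Unset Strict Implicit. Unset Printing Implicit Defensive.
Import Order.TTheory GRing.Theory Num.Theory.
Local Open Scope ring_scope.

(* A primitive v = (a, b) with |a| >= |b| has a != 0, and Bezout completes it
   to some [[a, c], [b, d]] in SL_2(R); the completions are exactly the right
   translates by U^+(R), which move c/a by elements of R.  From the
   factorisation [[a, c], [b, d]] = [[a, 0], [b, 1/a]] [[1, c/a], [0, 1]], a
   completion lies in P^- U^+_D iff c/a lies in D, so the strict fundamental
   domain D selects exactly one completion.  Rescaling the P^- factor by A_n
   turns its first column into pi^n v, which lies on the unit sphere, i.e.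
   equals overline v, exactly when ||v|| = q^n; this gives (1) <-> (2). *)

Lemma mx2_eta (T : Type) (M : 'M[T]_2) :
  M = mx2 (M i0 i0) (M i0 i1) (M i1 i0) (M i1 i1).
Proof.
apply/matrixP => i j; rewrite !mxE.
by case: i => [[|[|i]] Hi] //; case: j => [[|[|j]] Hj] //=; congr (M _ _); exact: val_inj.
Qed.

Lemma mx2_inj (T : Type) (a c b d a' c' b' d' : T) :
  mx2 a c b d = mx2 a' c' b' d' -> [/\ a = a', c = c', b = b' & d = d'].
Proof.
move=> E; have entry i j := congr1 (fun M : 'M[T]_2 => M i j) E.
by move: (entry i0 i0) (entry i0 i1) (entry i1 i0) (entry i1 i1); rewrite !mxE.
Qed.

Lemma mx2_forallP (T : Type) (P : T -> Prop) (a c b d : T) :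
  (forall i j, P (mx2 a c b d i j)) <-> [/\ P a, P c, P b & P d].
Proof.
split=> [H|[Pa Pc Pb Pd] i j].
  by move: (H i0 i0) (H i0 i1) (H i1 i0) (H i1 i1); rewrite !mxE.
by rewrite mxE; case: i => [[|[|i]] Hi] //; case: j => [[|[|j]] Hj].
Qed.

Lemma mulmx2 (T : comNzRingType) (a c b d a' c' b' d' : T) :
  mx2 a c b d *m mx2 a' c' b' d' =
  mx2 (a * a' + c * b') (a * c' + c * d') (b * a' + d * b') (b * c' + d * d').
Proof.
apply/matrixP => i j; rewrite !mxE !big_ord_recr big_ord0 /= add0r !mxE /=.
by case: i => [[|[|i]] Hi] //; case: j => [[|[|j]] Hj].
Qed.

Lemma det_mx2 (T : comNzRingType) (a c b d : T) : \det (mx2 a c b d) = a * d - c * b.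
Proof.
rewrite (expand_det_row _ ord0) !big_ord_recr big_ord0 /= add0r /cofactor.
by rewrite !det_mx11 !mxE /= !expr0 !mul1r; ring.
Qed.

Section Valuation.
Variables (T : fieldType) (u : T -> int).
Hypothesis u_ndval : is_ndval u.

Lemma ndvalM x y : x != 0 -> y != 0 -> u (x * y) = u x + u y.
Proof. by case: u_ndval => _ uM _ _; apply: uM. Qed.

Lemma ndval1 : u 1 = 0.
Proof. by have := @ndvalM 1 1 (oner_neq0 _) (oner_neq0 _); rewrite mulr1; lia. Qed.

Lemma ndvalV x : x != 0 -> u x^-1 = - u x.
Proof. by move=> x0; have := ndvalM x0 (invr_neq0 x0); rewrite mulfV // ndval1; lia. Qed.

Lemma ndvalN x : u (- x) = u x.
Proof.
have N1 : (-1 : T) != 0 by rewrite oppr_eq0 oner_neq0.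
have uN1 : u (-1) = 0 by have := ndvalM N1 N1; rewrite mulrNN mulr1 ndval1; lia.
have [->|x0] := eqVneq x 0; first by rewrite oppr0.
by rewrite -mulN1r ndvalM // uN1 add0r.
Qed.

Lemma ndval_eq1_neq0 x : u x = 1 -> x != 0.
Proof. by case: u_ndval => u0 _ _ _ ux; apply: contra_eq_neq ux => ->; rewrite u0. Qed.

Lemma ndval_expz x (z : int) : u x = 1 -> u (x ^ z) = z.
Proof.
move=> ux; have x0 := ndval_eq1_neq0 ux.
have uXn (n : nat) : u (x ^+ n) = n.
  elim: n => [|n IHn]; first by rewrite expr0 ndval1.
  by rewrite exprS ndvalM ?expf_neq0 // IHn ux; lia.
by case: z => n; rewrite ?NegzE -?exprnN ?ndvalV ?expf_neq0 // uXn; lia.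
Qed.

Lemma ndval_inO_unit x y : x * y = 1 -> inO u x -> inO u y -> u x = 0.
Proof.
move=> xy1; have x0 : x != 0 by apply: contra_eq_neq xy1 => ->; rewrite mul0r eq_sym oner_neq0.
have y0 : y != 0 by apply: contra_eq_neq xy1 => ->; rewrite mulr0 eq_sym oner_neq0.
have := ndvalM x0 y0; rewrite xy1 ndval1 => uxy.
by case=> [x0'|ux]; [rewrite x0' eqxx in x0 | case=> [y0'|uy]; [rewrite y0' eqxx in y0 | lia]].
Qed.

End Valuation.

Section Holomorphy.
Variables (K Kw : fieldType) (j : {rmorphism K -> Kw}) (om : K -> int).

Lemma Romega0 : Romega om 0.
Proof. by move=> u _ _; rewrite eqxx. Qed.

Lemma RomegaN x : Romega om x -> Romega om (- x).
Proof. by move=> Rx u uP Hne; rewrite oppr_eq0 ndvalN //; apply: Rx. Qed.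

Lemma RomegaM x y : Romega om x -> Romega om y -> Romega om (x * y).
Proof.
move=> Rx Ry u uP Hne; rewrite mulf_eq0 negb_or => /andP[x0 y0].
by rewrite ndvalM // addr_ge0 // ?(Rx u) ?(Ry u).
Qed.

Lemma RomegaD x y : Romega om x -> Romega om y -> Romega om (x + y).
Proof.
move=> Rx Ry u uP Hne xy0.
have [x0|x0] := eqVneq x 0; first by move: xy0; rewrite x0 add0r; apply: Ry.
have [y0|y0] := eqVneq y 0; first by move: xy0; rewrite y0 addr0; apply: Rx.
case: (uP) => _ _ u_min _; apply: le_trans (u_min _ _ x0 y0 xy0).
by rewrite le_min (Rx u) // (Ry u).
Qed.

Lemma Rw0 : Rw j om 0.
Proof. by exists 0; rewrite rmorph0; split => //; apply: Romega0. Qed.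

Lemma RwN x : Rw j om x -> Rw j om (- x).
Proof. by case=> y [Ry ->]; exists (- y); rewrite rmorphN; split => //; apply: RomegaN. Qed.

Lemma RwD x y : Rw j om x -> Rw j om y -> Rw j om (x + y).
Proof.
by case=> x' [Rx ->] [y' [Ry ->]]; exists (x' + y'); rewrite rmorphD; split => //; apply: RomegaD.
Qed.

Lemma RwM x y : Rw j om x -> Rw j om y -> Rw j om (x * y).
Proof.
by case=> x' [Rx ->] [y' [Ry ->]]; exists (x' * y'); rewrite rmorphM; split => //; apply: RomegaM.
Qed.

End Holomorphy.

Section Factorisation.
Variables (Kw : fieldType) (wv : Kw -> int).

Lemma absge_unimodular_neq0 (x y a b : Kw) : x * a + y * b = 1 -> absge wv a b -> a != 0.
Proof.
move=> xy1 [b0|[]] //; apply: contra_eq_neq xy1 => a0.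
by rewrite a0 b0 !mulr0 addr0 eq_sym oner_neq0.
Qed.

Lemma det1_absge_neq0 (a c b d : Kw) : a * d - c * b = 1 -> absge wv a b -> a != 0.
Proof. by move=> det1; apply: (@absge_unimodular_neq0 d (- c)); rewrite -det1; ring. Qed.

Lemma lnorm_absge (a b : Kw) : a != 0 -> absge wv a b -> lnorm wv (a, b) = - wv a.
Proof.
move=> a0 ab; rewrite /lnorm /= (negbTE a0).
by case: eqP => // b0; case: ab => [//|[_ ab]]; rewrite min_l.
Qed.

Lemma PU_mx2 (D : Kw -> Prop) (a c b d : Kw) : a != 0 -> a * d - c * b = 1 ->
  PU D (mx2 a c b d) <-> D (c / a).
Proof.
move=> a0 det1; split.
  case=> p [g [[_ p01] [Dg]]]; rewrite (mx2_eta p) p01 /Uplus mulmx2.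
  move=> EM; have [Ea Ec _ _] := mx2_inj EM.
  have Ec' : c = a * g by rewrite Ec Ea; ring.
  by rewrite Ec' mulrC mulKf.
move=> Dca; exists (mx2 a 0 b a^-1), (c / a); split; [split|split=> //].
  by rewrite /SL2 det_mx2; field.
  by rewrite mxE.
have -> : d = (1 + c * b) / a by rewrite -det1; field.
by rewrite /Uplus mulmx2; congr mx2; field.
Qed.

Lemma Gamma_sharp_mx2 (R : Kw -> Prop) (a c b d : Kw) :
  Gamma_sharp wv R (mx2 a c b d) <->
  [/\ a * d - c * b = 1, [/\ R a, R c, R b & R d] & absge wv a b].
Proof.
rewrite /Gamma_sharp /GammaR /SL2 det_mx2 mx2_forallP !mxE /=.
by split=> [[[]]|[]].
Qed.

Variables (pi : Kw) (Th : Kw * Kw -> Prop) (n : int) (D' : Kw -> Prop).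
Hypotheses (wv_ndval : is_ndval wv) (wv_pi : wv pi = 1).

Lemma PThetaAU_mx2 (a c b d : Kw) : a * d - c * b = 1 -> absge wv a b ->
  PThetaAU wv pi Th n D' (mx2 a c b d) <->
  [/\ lnorm wv (a, b) = n, Th (vbar wv pi (a, b)) & D' (c / a)].
Proof.
move=> det1 ab; have a0 := det1_absge_neq0 det1 ab.
have P0 : pi ^ n != 0 by rewrite expfz_neq0 // (ndval_eq1_neq0 wv_ndval wv_pi).
have wvP : wv (pi ^ n) = n by rewrite ndval_expz.
rewrite /PThetaAU /An /vbar lnorm_absge // -[pi ^ (- n)]invr_expz.
set P := pi ^ n in P0 wvP *; split.
  case=> p [g [[[[detp p01] pO] Thp] [D'g EM]]].
  move: detp Thp pO EM; rewrite /SL2 (mx2_eta p) p01 mx2_forallP /mcol1 det_mx2 !mxE /=.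
  move: (p i0 i0) (p i1 i0) (p i1 i1) => p0 p1 p3 detp Thp [p0O _ _ p3O].
  rewrite /Uplus !mulmx2 => EM; have [Ea Ec Eb _] := mx2_inj EM.
  have p30 : p0 * p3 = 1 by rewrite -detp; ring.
  have p00 : p0 != 0 by apply: contra_eq_neq p30 => ->; rewrite mul0r eq_sym oner_neq0.
  have wvp0 := ndval_inO_unit wv_ndval p30 p0O p3O.
  have {}Ea : a = p0 / P by rewrite Ea; ring.
  have {}Eb : b = p1 / P by rewrite Eb; ring.
  have {}Ec : c = a * g by rewrite Ec Ea; ring.
  have wva : wv a = - n by rewrite Ea ndvalM ?invr_neq0 // ndvalV // wvp0 wvP add0r.
  rewrite wva opprK -/P; split => //.
  - by rewrite Ea Eb ![P * (_ / P)]mulrCA mulfV ?mulr1.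
  - by rewrite Ec mulrC mulKf.
case=> wva Thv D'ca; rewrite wva -/P in Thv.
exists (mx2 (P * a) 0 (P * b) (P^-1 / a)), (c / a).
split; [split; [split; [split|] |] | split => //].
- by rewrite /SL2 det_mx2; field; rewrite a0 P0.
- by rewrite mxE.
- apply/mx2_forallP; split; rewrite /inO.
  + by right; rewrite ndvalM // wvP; lia.
  + by left.
  + have [->|b0] := eqVneq b 0; first by left; rewrite mulr0.
    by right; rewrite ndvalM // wvP; case: ab => [b0'|[_]]; [rewrite b0' eqxx in b0 | lia].
  + by right; rewrite ndvalM ?invr_neq0 // !ndvalV // wvP; lia.
- by rewrite /mcol1 !mxE.
- have -> : d = (1 + c * b) / a by rewrite -det1; field.
  by rewrite /Uplus !mulmx2; congr mx2; field; rewrite ?a0 P0.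
Qed.

End Factorisation.
Section SharpCompletion.
Variables (Kw : fieldType) (wv : Kw -> int) (R D : Kw -> Prop).
Hypotheses (R0 : R 0) (RN : forall x, R x -> R (- x)) (RD : forall x y, R x -> R y -> R (x + y))
  (RM : forall x y, R x -> R y -> R (x * y)).
Hypothesis D_fund : strict_fund_dom R D.

Definition sharp_completion (v : Kw * Kw) (M : 'M[Kw]_2) : Prop :=
  [/\ Gamma_sharp wv R M, PU D M & mcol1 M = v].

Lemma sharp_completion_form (a b : Kw) M :
  sharp_completion (a, b) M -> exists c d, M = mx2 a c b d.
Proof. by case=> _ _ [<- <-]; exists (M i0 i1), (M i1 i1); apply: mx2_eta. Qed.

Lemma sharp_completion_mx2 (a c b d : Kw) :
  sharp_completion (a, b) (mx2 a c b d) <->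
  [/\ a * d - c * b = 1, [/\ R a, R c, R b & R d], absge wv a b & D (c / a)].
Proof.
have PU_ca : a * d - c * b = 1 -> absge wv a b -> PU D (mx2 a c b d) <-> D (c / a).
  by move=> det1 ab; apply: PU_mx2 (det1_absge_neq0 det1 ab) det1.
split=> [[/Gamma_sharp_mx2[det1 Rabcd ab] /(PU_ca det1 ab) Dca _]|[det1 Rabcd ab Dca]] //.
split; first exact/Gamma_sharp_mx2.
  exact/(PU_ca det1 ab).
by rewrite /mcol1 !mxE.
Qed.

Lemma sharp_completion_prim v M : sharp_completion v M -> prim2sharp R wv v.
Proof.
case: v => a b /[dup] /sharp_completion_form[c [d ->]].
case/sharp_completion_mx2 => det1 [Ra Rc Rb Rd] ab _.
split=> //; exists d, (- c); split=> //; split; first exact: RN.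
by rewrite /= -det1; ring.
Qed.

Lemma sharp_completion_exists v : prim2sharp R wv v -> exists M, sharp_completion v M.
Proof.
case: v => a b [/= Ra Rb [x [y [Rx [Ry xy1]]]] ab].
have a0 := absge_unimodular_neq0 xy1 ab.
have [r [[Rr Dr] _]] := D_fund (- y / a).
exists (mx2 a (- y + r * a) b (x + r * b)); apply/sharp_completion_mx2; split=> //.
- by rewrite -xy1; ring.
- by split=> //; apply: RD; [apply: RN | apply: RM | | apply: RM].
- by have -> : (- y + r * a) / a = - y / a + r by field.
Qed.

(* Two completions differ by a translation by t = d c' - c d' in R, which
   shifts c / a by t; the fundamental domain forces t = 0. *)
Lemma sharp_completion_uniq v M M' :
  sharp_completion v M -> sharp_completion v M' -> M = M'.
Proof.
case: v => a b /[dup] /sharp_completion_form[c [d ->]] C.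
move=> /[dup] /sharp_completion_form[c' [d' ->]].
case/sharp_completion_mx2: C => det1 [_ Rc _ Rd] ab Dc.
case/sharp_completion_mx2 => det1' [_ Rc' _ Rd'] _ Dc'.
have a0 := det1_absge_neq0 det1 ab.
have ad : a * d = 1 + c * b by rewrite -det1; ring.
have ad' : a * d' = 1 + c' * b by rewrite -det1'; ring.
pose t := d * c' - c * d'.
have Ec' : c' = c + t * a.
  have -> : c + t * a = c + (a * d) * c' - (a * d') * c by rewrite /t; ring.
  by rewrite ad ad'; ring.
have [r [_ r_uniq]] := D_fund (c / a).
have r0 : r = 0 by apply: r_uniq; rewrite addr0.
have rt : r = t.
  apply: r_uniq; split; first by apply: RD; [apply: RM | apply: RN; apply: RM].
  by have <- : c' / a = c / a + t by rewrite Ec'; field.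
have Ec : c' = c by rewrite Ec' -rt r0 mul0r addr0.
have Ed : d' = d by apply: (mulfI a0); rewrite ad ad' Ec.
by rewrite Ec Ed.
Qed.

Definition gamma (v : Kw * Kw) : 'M[Kw]_2 :=
  epsilon (inhabits 0) (sharp_completion v).

Lemma gammaP v : prim2sharp R wv v -> sharp_completion v (gamma v).
Proof. by move=> /sharp_completion_exists; apply: epsilon_spec. Qed.

Variables (pi : Kw) (Th : Kw * Kw -> Prop) (n : int) (D' : Kw -> Prop) (I : Kw -> Prop).
Hypotheses (wv_ndval : is_ndval wv) (wv_pi : wv pi = 1).

Lemma gamma_Gamma0_PThetaAU v : prim2sharp R wv v ->
  [/\ norm_is_pow wv v n, I v.2, Th (vbar wv pi v) & D' ((mcol2 (gamma v)).1 / v.1)]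
  <-> Gamma0 R I (gamma v) /\ PThetaAU wv pi Th n D' (gamma v).
Proof.
case: v => a b /gammaP /[dup] /sharp_completion_form[c [d ->]].
case/sharp_completion_mx2 => det1 Rabcd ab _.
have a0 := det1_absge_neq0 det1 ab.
rewrite /Gamma0 /GammaR (PThetaAU_mx2 _ _ _ wv_ndval wv_pi det1 ab) /SL2 det_mx2.
rewrite mx2_forallP /norm_is_pow /mcol2 !mxE /=.
split=> [[[_ norm_n] Ib Thv D'ca]|[[_ Ib] [norm_n Thv D'ca]]] //.
by split=> //; split=> // -[a0']; rewrite a0' eqxx in a0.
Qed.

End SharpCompletion.

Theorem proposition3p1 (F : finFieldType) (K : fieldType) (iota : {rmorphism F -> K})
  (om : K -> int) (Kw : fieldType) (j : {rmorphism K -> Kw}) (wv : Kw -> int)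
  (pi : Kw) (D : Kw -> Prop) :
  is_global_function_field iota -> is_ndval om -> is_ndval wv ->
  is_completion j om wv -> wv pi = 1 ->
  strict_fund_dom (Rw j om) D ->
  let R := Rw j om in
  exists gam : Kw * Kw -> 'M[Kw]_2,
    [/\ forall v, prim2sharp R wv v -> Gamma_sharp wv R (gam v) /\ PU D (gam v),
        forall v v', prim2sharp R wv v -> prim2sharp R wv v' -> gam v = gam v' -> v = v',
        forall M, Gamma_sharp wv R M -> PU D M -> exists2 v, prim2sharp R wv v & gam v = M,
        forall v, prim2sharp R wv v -> mcol1 (gam v) = v /\ R (mcol2 (gam v)).1 /\ R (mcol2 (gam v)).2
      & forall v, prim2sharp R wv v ->
        forall (n : int) (Th : Kw * Kw -> Prop) (D' : Kw -> Prop) (I : Kw -> Prop),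
          (forall u, Th u -> sphere1 wv u) -> borel (open2 wv) Th ->
          (forall x, D' x -> D x) -> borel (open1 wv) D' ->
          is_nonzero_ideal R I ->
          ([/\ norm_is_pow wv v n, I v.2, Th (vbar wv pi v) & D' ((mcol2 (gam v)).1 / v.1)]
           <-> (Gamma0 R I (gam v) /\ PThetaAU wv pi Th n D' (gam v)))].
Proof.
move=> _ _ wv_ndval _ wv_pi D_fund R.
have R0 : R 0 := Rw0 j om.
have RN : forall x, R x -> R (- x) := @RwN _ _ j om.
have RD : forall x y, R x -> R y -> R (x + y) := @RwD _ _ j om.
have RM : forall x y, R x -> R y -> R (x * y) := @RwM _ _ j om.
have gamP := @gammaP _ wv _ _ RN RD RM D_fund.
exists (gamma wv R D); split.
- by move=> v /gamP[].
- by move=> v v' /gamP[_ _ Ev] /gamP[_ _ Ev'] E; rewrite -Ev -Ev' E.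
- move=> M MG MP; have C : sharp_completion wv R D (mcol1 M) M by [].
  have M_prim := sharp_completion_prim RN C.
  by exists (mcol1 M) => //; exact: (sharp_completion_uniq R0 RN RD RM D_fund (gamP _ M_prim) C).
- by move=> v /gamP[[[_ RMij] _] _ Ev]; split=> //; split; apply: RMij.
- move=> v v_prim n Th D' I _ _ _ _ _.
  exact (gamma_Gamma0_PThetaAU RN RD RM D_fund Th n D' I wv_ndval wv_pi v_prim).
Qed.
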